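(* Let $A$ be a linear Nakayama algebra with vertices labelled canonically $1\to 2\to\cdots\to n$. Then Ringel's homological permutation $\hat{h}$ of $A$ coincides with the Coxeter permutation $p_A$ of $A$ (computed with respect to this labelling).
   Context: $A=KQ/I$ with $K$ a field, $Q$ the quiver $1\to2\to\cdots\to n$ and $I$ an admissible ideal (a linear Nakayama algebra); modules are finitely generated right modules, $S_i$, $P(i)=e_iA$, $I(i)=D(Ae_i)$ are the simple, indecomposable projective and indecomposable injective modules at vertex $i$, and $I(S)$ denotes the injective envelope of $S$. $\Omega$ denotes the syzygy (kernel of a projective cover). For a simple module $S$ let $e(S)=\min\{\operatorname{pdim}S,\operatorname{pdim}I(S)\}$ (finite for Nakayama algebras), let $N(S)=S$ if $e(S)$ is odd and $N(S)=I(S)$ if $e(S)$ is even, and set $h(S)=\operatorname{top}\Omega^{e(S)}(N(S))$; this is a simple module and $h$ is a bijection on isoclasses of simple modules. Ringel's homological permutation is $\hat h:\{1,\ldots,n\}\to\{1,\ldots,n\}$, $\hat h(i)=j$ if $h(S_i)\cong S_j$. The Cartan matrix is $\omega_A=(\dim_K e_jAe_i)_{i,j}$, the Coxeter matrix is $C_A=-\omega_A^T\omega_A^{-1}$. A Bruhat decomposition of an invertible matrix $M$ is $M=U_1PU_2$ with $U_1,U_2$ upper triangular and $P$ a permutation matrix (uniquely determined by $M$). The Coxeter permutation $p_A$ is defined by $p_A(i)=j$ if the unique non-zero entry in column $i$ of the permutation matrix $P$ of a Bruhat decomposition of $C_A$ lies in row $j$. *)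

From HB Require Import structures.
From mathcomp Require Import all_boot all_order all_algebra all_fingroup.
Set Implicit Arguments. Unset Strict Implicit. Unset Printing Implicit Defensive.
Import GRing.Theory.

(* Vertices of the linear quiver 1 -> 2 -> ... -> n are coded by
   0, 1, ..., n-1 (vertex i+1 of the paper is coded by i).

   A linear Nakayama algebra A = KQ/I (I admissible) is determined up to
   isomorphism by its Kupisch series c : c i = length of P(i) = e_i A,
   whose composition factors are S_i, S_(i+1), ..., S_(i + c i - 1).
   Admissible Kupisch series:  c (n-1) = 1 (P(n) = S_n),
   c i >= 2 for i < n-1 (I contained in rad^2: no arrow is killed),
   and c i <= c (i+1) + 1 (e_i A rad = quotient of e_(i+1) A). *)
Definition kupisch (n : nat) (c : nat -> nat) : Prop :=
  [/\ 0 < n, c n.-1 = 1,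
      (forall i, i < n.-1 -> 2 <= c i) &
      (forall i, i < n.-1 -> c i <= (c i.+1).+1)].

(* Indecomposable modules are uniserial: M = (a, l) is the module with top
   S_a and length l (1 <= l <= c a), i.e. e_a A / e_a rad^l, with
   composition factors S_a, ..., S_(a+l-1). *)
Definition nmod := (nat * nat)%type.

Definition top (M : nmod) : nat := M.1.

Definition simple_mod (i : nat) : nmod := (i, 1).

Definition is_projective (c : nat -> nat) (M : nmod) : bool := M.2 == c M.1.

(* syzygy: kernel of the projective cover P(a) -> M, which is
   e_a rad^l = the module with top S_(a+l) and length c a - l *)
Definition syzygy (c : nat -> nat) (M : nmod) : nmod :=
  (M.1 + M.2, c M.1 - M.2).

(* injective envelope I(S_i) = I(i): the longest uniserial module with
   socle S_i, i.e. top S_a with a minimal such that i < a + c a. *)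
Definition inj_env (c : nat -> nat) (i : nat) : nmod :=
  let a := find (fun a => i < a + c a) (iota 0 i.+1) in (a, i.+1 - a).

(* projective dimension: least k such that Omega^k M is projective.
   Along the syzygy sequence the top strictly increases, so for a
   module over an algebra with n vertices n iterations suffice. *)
Fixpoint pdim_fuel (c : nat -> nat) (fuel : nat) (M : nmod) : nat :=
  match fuel with
  | 0 => 0
  | f.+1 => if is_projective c M then 0 else (pdim_fuel c f (syzygy c M)).+1
  end.

Definition pdim (n : nat) (c : nat -> nat) (M : nmod) : nat := pdim_fuel c n M.

Definition e_simple (n : nat) (c : nat -> nat) (i : nat) : nat :=
  minn (pdim n c (simple_mod i)) (pdim n c (inj_env c i)).

Definition N_simple (n : nat) (c : nat -> nat) (i : nat) : nmod :=
  if odd (e_simple n c i) then simple_mod i else inj_env c i.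

Definition hhat (n : nat) (c : nat -> nat) (i : nat) : nat :=
  top (iter (e_simple n c i) (syzygy c) (N_simple n c i)).

Local Open Scope ring_scope.

(* Cartan matrix (omega_A)_{i,j} = dim_K e_j A e_i = [ j <= i < j + c j ] *)
Definition cartan (n : nat) (c : nat -> nat) : 'M[rat]_n :=
  \matrix_(i < n, j < n) (if (j <= i < j + c j)%N then 1 else 0).

Definition coxeter (n : nat) (c : nat -> nat) : 'M[rat]_n :=
  - ((cartan n c)^T *m invmx (cartan n c)).

Definition upper_triangular (n : nat) (U : 'M[rat]_n) : Prop :=
  forall i j : 'I_n, (j < i)%N -> U i j = 0.

Definition bruhat_decomp (n : nat) (M : 'M[rat]_n) (s : 'S_n)
    (U1 U2 : 'M[rat]_n) : Prop :=
  [/\ upper_triangular U1, upper_triangular U2 & M = U1 *m perm_mx s *m U2].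

(* Every indecomposable module is a uniserial interval [x, z) of simples, whose
   syzygy is [z, x + c x); so the syzygies of S_i and of I(S_i) are intervals
   between iterates of pend : x |-> x + c x, started at i, i + 1 and the top a
   of I(S_i).  The Cartan matrix omega is lower unitriangular.  Let D be the
   matrix whose column i is the dimension vector of N(S_i), which is upper
   unitriangular since N(S_i) has socle S_i, and X := omega^-1 D.  Column i of
   X is the alternating sum of the tops of the minimal projective resolution of
   N(S_i); as pdim N(S_i) = e(S_i), its last nonzero entry is in row hhat i.
   Once hhat is injective, X = U P with U upper triangular and P the
   permutation matrix of hhat^-1, so C_A = -omega^T omega^-1 = (-omega^T U) P D^-1
   is a Bruhat decomposition, and the permutation of such a decomposition is
   unique.
   Injectivity: if hhat j' = hhat j = k with j' < j, column j' of X is a vector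
   x with x k <> 0 and (omega x) p = 0 for p >= j.  Subtracting consecutive rows
   of omega x gives x (p + 1) = sum of the x q with pend q = p + 1 there, so x
   vanishes at each vertex all of whose pend-ancestors lie above j.  The
   interval description of the resolution of N(S_j) shows that k itself (e odd),
   or every q < k with pend q = pend k (e even), is such a vertex; either way
   x k = 0. *)

From mathcomp Require Import all_boot all_order all_algebra all_fingroup.
From mathcomp Require Import zify.
Set Implicit Arguments. Unset Strict Implicit. Unset Printing Implicit Defensive.
Import GRing.Theory Num.Theory.

Section UpperTriangular.
Local Open Scope ring_scope.
Variable m : nat.
Implicit Types (A B : 'M[rat]_m) (s : 'S_m).

Lemma upper_triangular_mul A B :
  upper_triangular A -> upper_triangular B -> upper_triangular (A *m B).
Proof.
move=> uA uB i j ji; rewrite mxE big1 // => k _.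
case: (ltnP k i) => [ki | ik]; first by rewrite uA ?mul0r.
by rewrite uB ?mulr0 //; lia.
Qed.

Lemma upper_triangular_opp A : upper_triangular A -> upper_triangular (- A).
Proof. by move=> uA i j ji; rewrite mxE uA ?oppr0. Qed.

Lemma upper_triangular_trmx A : is_trig_mx A -> upper_triangular A^T.
Proof. by move=> /is_trig_mxP tA i j ji; rewrite mxE tA. Qed.

Lemma det_upper_triangular A : upper_triangular A -> \det A = \prod_(i < m) A i i.
Proof.
move=> uA; rewrite -det_tr det_trig; last first.
  by apply/is_trig_mxP => i j ij; rewrite mxE uA.
by apply: eq_bigr => i _; rewrite mxE.
Qed.

Lemma upper_triangular_diag_neq0 A :
  upper_triangular A -> A \in unitmx -> forall i, A i i != 0.
Proof.
move=> uA; rewrite unitmxE det_upper_triangular // unitfE => dA i.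
by apply: contraNneq dA => Aii0; rewrite (bigD1 i) //= Aii0 mul0r.
Qed.

Lemma upper_triangular_invmx A :
  upper_triangular A -> A \in unitmx -> upper_triangular (invmx A).
Proof.
move=> uA Au; have dA := upper_triangular_diag_neq0 uA Au.
suff below (k : nat) (i j : 'I_m) : (m - k <= i)%N -> (j < i)%N -> invmx A i j = 0.
  by move=> i j; apply: (below m); lia.
elim: k i j => [|k IH] i j ki ji; first by have := ltn_ord i; lia.
have : (A *m invmx A) i j = 0 by rewrite mulmxV // mxE (gtn_eqF ji : (i == j) = false).
rewrite mxE (bigD1 i) //= big1 ?addr0 => [/eqP|l li].
  by rewrite mulf_eq0 (negbTE (dA i)) => /eqP.
case: (ltngtP l i) => [l_lt_i | i_lt_l | /val_inj l_eq_i].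
- by rewrite uA ?mul0r.
- by rewrite IH ?mulr0 //; lia.
- by rewrite l_eq_i eqxx in li.
Qed.

Lemma perm_eq1_of_le s : (forall i, (s i <= i)%N) -> s = 1%g.
Proof.
move=> s_le; apply/permP => i; rewrite perm1.
elim/ltn_ind: (i : nat) {-2}i (erefl (i : nat)) => k IH {}i ik.
apply/val_inj/eqP; rewrite eqn_leq s_le leqNgt; apply/negP => lt_si.
have /perm_inj si_i := IH _ (leq_trans lt_si (eq_leq ik)) (s i) erefl.
by rewrite si_i ltnn in lt_si.
Qed.

Lemma upper_triangular_perm_eq A B s s' :
  upper_triangular A -> upper_triangular B -> (forall i, A i i != 0) ->
  A *m perm_mx s = perm_mx s' *m B -> s = s'.
Proof.
move=> uA uB dA E.
have le_k k : (s' (s^-1 k)%g <= k)%N.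
  have := congr1 (fun M : 'M[rat]_m => M (s^-1 k)%g k) E.
  rewrite -row_permE -[s in perm_mx s]invgK -col_permE !mxE => Ekk.
  by rewrite leqNgt; apply: contraL (dA (s^-1 k)%g) => lt; rewrite Ekk uB ?eqxx.
have : (s^-1 * s')%g = 1%g by apply: perm_eq1_of_le => k; rewrite permM.
by move/(congr1 (mulg s)); rewrite mulgA mulgV mul1g mulg1.
Qed.

Lemma bruhat_perm_unique (M : 'M[rat]_m) s s' U1 U2 V1 V2 :
  M \in unitmx -> bruhat_decomp M s U1 U2 -> bruhat_decomp M s' V1 V2 -> s = s'.
Proof.
move=> Mu [uU1 uU2 EU] [uV1 uV2 EV].
move: (Mu); rewrite {1}EU !unitmx_mul => /andP[/andP[U1u _] U2u].
move: Mu; rewrite EV !unitmx_mul => /andP[/andP[V1u _] _].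
pose A := invmx V1 *m U1; pose B := V2 *m invmx U2.
have uA : upper_triangular A.
  exact: upper_triangular_mul (upper_triangular_invmx _ _) uU1.
have uB : upper_triangular B.
  exact: upper_triangular_mul uV2 (upper_triangular_invmx _ _).
have Au : A \in unitmx by rewrite unitmx_mul unitmx_inv V1u U1u.
apply: (upper_triangular_perm_eq uA uB (upper_triangular_diag_neq0 uA Au)).
rewrite /A /B mulmxA; apply: (canRL (mulmxK U2u)); rewrite -!mulmxA.
by apply: (canLR (mulKmx V1u)); rewrite !mulmxA -EU EV.
Qed.

End UpperTriangular.

Section Kupisch.
Variables (n : nat) (c : nat -> nat).
Hypothesis Hc : kupisch n c.

Lemma c_gt0 x : x < n -> 0 < c x.
Proof.
case: Hc => n_gt0 c_last c_ge2 _ xn.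
case: (ltnP x n.-1) => [/c_ge2 | le_x]; first lia.
have -> : x = n.-1 by lia.
by rewrite c_last.
Qed.

Lemma add_c_mono x y : x <= y -> y < n -> x + c x <= y + c y.
Proof.
case: Hc => _ c_last _ c_step le_xy yn.
elim: y le_xy yn => [|y IH]; first by rewrite leqn0 => /eqP ->.
rewrite leq_eqVlt => /orP[/eqP -> // | /IH le_x yn].
by have := c_step y ltac:(lia); have := le_x (ltnW yn); lia.
Qed.

Lemma add_c_leq x : x < n -> x + c x <= n.
Proof.
case: Hc => n_gt0 c_last _ _ xn.
have := @add_c_mono x n.-1 ltac:(lia) ltac:(lia); rewrite c_last; lia.
Qed.

(* [pend x] is one past the socle of [P(x)]; outside the quiver it is the
   identity, which keeps it monotone on all of [nat]. *)
Definition pend x := if x < n then x + c x else x.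

Lemma pendE x : x < n -> pend x = x + c x.
Proof. by rewrite /pend => ->. Qed.

Lemma leq_pend x : x <= pend x.
Proof. by rewrite /pend; case: ifP => _; rewrite ?leq_addr. Qed.

Lemma ltn_pend x : x < n -> x < pend x.
Proof. by move=> xn; rewrite pendE // -addn1 leq_add2l c_gt0. Qed.

Lemma pend_leq x : x < n -> pend x <= n.
Proof. by move=> xn; rewrite pendE ?add_c_leq. Qed.

Lemma pend_mono : {homo pend : x y / x <= y}.
Proof.
move=> x y le_xy; rewrite /pend; case: (ltnP y n) => yn.
  by rewrite (leq_ltn_trans le_xy yn) add_c_mono.
by case: ifP => // xn; apply: leq_trans (add_c_leq xn) yn.
Qed.

Lemma iter_pend_mono d : {homo iter d pend : x y / x <= y}.
Proof. by move=> x y le_xy; elim: d => //= d IH; apply: pend_mono. Qed.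

Lemma leq_iter_pend d x : x <= iter d pend x.
Proof. by elim: d => //= d IH; apply: leq_trans IH (leq_pend _). Qed.

Lemma iter_pend_leq d d' x : d <= d' -> iter d pend x <= iter d' pend x.
Proof. by move=> le_dd'; rewrite -(subnKC le_dd') addnC iterD leq_iter_pend. Qed.

Definition ancestors_gt j w := forall d z, iter d pend z = w -> j < z.

(* In use, [a] is the top of [I(S_j)], and the first hypothesis is its minimality. *)
Lemma ancestors_gt_of a j w nu :
  (forall z, z < a -> pend z <= j) ->
  (forall d, d <= nu -> iter d pend j < w) -> w < iter nu.+1 pend a ->
  ancestors_gt j w.
Proof.
move=> below_a lt_j lt_a; elim=> [|d IH] z Ez; rewrite ltnNge; apply/negP => le_zj.
  by have := lt_j 0 (leq0n _); move: Ez => /=; lia.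
case: (leqP d.+1 nu) => [le_dnu | lt_nud].
  by have := iter_pend_mono d.+1 le_zj; have := lt_j _ le_dnu; lia.
case: (ltnP z a) => [lt_za | le_az].
  by have := IH (pend z); rewrite -iterSr => /(_ Ez); have := below_a _ lt_za; lia.
by have := iter_pend_mono d.+1 le_az; have := iter_pend_leq a lt_nud; lia.
Qed.

Definition is_module (M : nmod) := [&& M.1 < n, 0 < M.2 & M.2 <= c M.1].

Definition itv x z : nmod := (x, z - x).

Lemma is_module_itv x z : is_module (itv x z) = [&& x < n, x < z & z <= pend x].
Proof.
rewrite /is_module /itv /pend /=; case: (ltnP x n) => //= xn.
by apply/andP/andP => -[]; lia.
Qed.

Lemma is_projective_itv x z :
  x < n -> x <= z -> is_projective c (itv x z) = (z == pend x).
Proof. by move=> xn le_xz; rewrite /is_projective /itv pendE //=; apply/eqP/eqP; lia. Qed.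

Lemma syzygy_itv x z : x < n -> x <= z -> syzygy c (itv x z) = itv z (pend x).
Proof. by move=> xn le_xz; rewrite /syzygy /itv pendE //=; congr pair; lia. Qed.

Lemma is_module_syzygy_itv x z :
  is_module (itv x z) -> z != pend x -> is_module (itv z (pend x)).
Proof.
rewrite !is_module_itv => /and3P[xn lt_xz le_zx] nproj.
have lt_zx : z < pend x by rewrite ltn_neqAle nproj le_zx.
by rewrite lt_zx pend_mono ?(ltnW lt_xz) // andbT (leq_trans lt_zx (pend_leq xn)).
Qed.

(* x, z, pend x, pend z, pend^2 x, ...: the successive syzygies of [itv x z]
   are the intervals between consecutive terms. *)
Definition syz_seq x z t := if odd t then iter t./2 pend z else iter t./2 pend x.

Lemma syz_seq_double x z m : syz_seq x z m.*2 = iter m pend x.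
Proof. by rewrite /syz_seq odd_double doubleK. Qed.

Lemma syz_seq_double_succ x z m : syz_seq x z m.*2.+1 = iter m pend z.
Proof. by rewrite /syz_seq /= odd_double uphalf_double. Qed.

Lemma syz_seq_shift x z t : syz_seq z (pend x) t = syz_seq x z t.+1.
Proof.
rewrite -(odd_double_half t); case: (odd t) => /=.
  by rewrite -doubleS syz_seq_double syz_seq_double_succ iterSr.
by rewrite syz_seq_double syz_seq_double_succ.
Qed.

Lemma leq_syz_seq x z t : x <= z -> x <= syz_seq x z t.
Proof.
move=> le_xz; rewrite /syz_seq; case: ifP => _; last exact: leq_iter_pend.
exact: leq_trans le_xz (leq_iter_pend _ _).
Qed.

Lemma pdim_itvP fuel x z : is_module (itv x z) -> n <= x + fuel ->
  [/\ iter (pdim_fuel c fuel (itv x z)) (syzygy c) (itv x z) =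
        itv (syz_seq x z (pdim_fuel c fuel (itv x z)))
            (syz_seq x z (pdim_fuel c fuel (itv x z)).+1),
      forall t, t <= pdim_fuel c fuel (itv x z) ->
        is_module (itv (syz_seq x z t) (syz_seq x z t.+1)),
      forall t, t < pdim_fuel c fuel (itv x z) ->
        syz_seq x z t.+1 != pend (syz_seq x z t) &
      syz_seq x z (pdim_fuel c fuel (itv x z)).+1 =
        pend (syz_seq x z (pdim_fuel c fuel (itv x z)))].
Proof.
elim: fuel x z => [|f IH] x z Mxz fuel_n;
  move: (Mxz); rewrite is_module_itv => /and3P[xn lt_xz le_zx]; first lia.
rewrite /= is_projective_itv ?(ltnW lt_xz) //; case: eqP => [proj | /eqP nproj].
  by split=> // t; rewrite ?leqn0 ?ltn0 // => /eqP ->.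
have Mz := is_module_syzygy_itv Mxz nproj.
have [E V N P] := IH _ _ Mz ltac:(lia).
rewrite syzygy_itv ?(ltnW lt_xz) //; rewrite !syz_seq_shift in E P.
split; rewrite ?iterSr ?syzygy_itv ?(ltnW lt_xz) //.
- by case=> [|t] //; rewrite ltnS => /V; rewrite !syz_seq_shift.
- by case=> [|t] //; rewrite ltnS => /N; rewrite !syz_seq_shift.
Qed.

Local Open Scope ring_scope.

(* The coordinates of the class of [M] in the basis of the classes of the
   indecomposable projectives: the alternating sum of the tops of the terms
   of its minimal projective resolution. *)
Fixpoint res_vec (fuel : nat) (M : nmod) : nat -> rat :=
  if fuel is f.+1 then
    fun q => ((q == M.1)%N)%:R -
             (if is_projective c M then 0 else res_vec f (syzygy c M) q)
  else fun _ => 0.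

Definition cartan_act (x : nat -> rat) (p : nat) : rat :=
  \sum_(q < n) ((q <= p < q + c q)%N)%:R * x q.

Lemma sum_ord_delta (F : nat -> rat) t :
  \sum_(q < n) F q * ((q : nat) == t)%:R = ((t < n)%N)%:R * F t.
Proof.
case: (ltnP t n) => [tn | nt]; last first.
  by rewrite mul0r big1 // => q _; rewrite ltn_eqF ?mulr0 // (leq_trans _ nt).
rewrite mul1r (bigD1 (Ordinal tn)) //= eqxx mulr1 big1 ?addr0 // => q neq_qt.
rewrite (_ : (q : nat) == t = false) ?mulr0 //.
by apply: contraNF neq_qt => /eqP qt; apply/eqP/val_inj.
Qed.

Lemma cartan_act_res_vec fuel x z : is_module (itv x z) -> (n <= x + fuel)%N ->
  forall p, cartan_act (res_vec fuel (itv x z)) p = ((x <= p < z)%N)%:R.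
Proof.
elim: fuel x z => [|f IH] x z Mxz fuel_n p;
  move: (Mxz); rewrite is_module_itv => /and3P[xn lt_xz le_zx]; first lia.
rewrite /cartan_act /=; under eq_bigr do rewrite mulrBr.
rewrite sumrB (sum_ord_delta (fun q => ((q <= p < q + c q)%N)%:R)) xn mul1r.
rewrite is_projective_itv ?(ltnW lt_xz) //.
have [proj | /eqP nproj] := eqP.
  by rewrite big1 ?subr0 -?pendE ?proj // => q; rewrite mulr0.
have Mz := is_module_syzygy_itv Mxz nproj.
rewrite syzygy_itv ?(ltnW lt_xz) //.
have := IH _ _ Mz ltac:(lia) p; rewrite /cartan_act => ->.
have -> : ((x <= p < x + c x) : nat) = ((x <= p < z) + (z <= p < pend x))%N.
  by rewrite pendE // in le_zx *; lia.
by rewrite natrD addrK.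
Qed.

Lemma res_vec_pivot fuel x z : is_module (itv x z) -> (n <= x + fuel)%N ->
  let T := syz_seq x z (pdim_fuel c fuel (itv x z)) in
  (forall q, (T < q)%N -> res_vec fuel (itv x z) q = 0) /\ res_vec fuel (itv x z) T != 0.
Proof.
elim: fuel x z => [|f IH] x z Mxz fuel_n;
  move: (Mxz); rewrite is_module_itv => /and3P[xn lt_xz le_zx]; first lia.
rewrite /= is_projective_itv ?(ltnW lt_xz) //; have [proj | /eqP nproj] := eqP.
  by split=> [q lt_xq|]; rewrite ?subr0 ?(gtn_eqF lt_xq) ?eqxx ?oner_eq0.
have Mz := is_module_syzygy_itv Mxz nproj.
have [above pivot] := IH _ _ Mz ltac:(lia).
have lt_xT : (x < syz_seq z (pend x) (pdim_fuel c f (itv z (pend x))))%N.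
  exact: leq_trans lt_xz (leq_syz_seq _ le_zx).
rewrite syzygy_itv ?(ltnW lt_xz) // -syz_seq_shift.
split=> [q lt_Tq|]; first by rewrite above // gtn_eqF ?subr0 //; apply: ltn_trans lt_Tq.
by rewrite gtn_eqF // sub0r oppr_eq0.
Qed.

Lemma natr_sub_eq (a b a' b' : nat) :
  (a + b' = a' + b)%N -> a%:R - b%:R = a'%:R - b'%:R :> rat.
Proof. by move=> E; apply/eqP; rewrite subr_eq addrAC eq_sym subr_eq -!natrD E. Qed.

Lemma cartan_act_succ x p :
  cartan_act x p.+1 - cartan_act x p =
  ((p.+1 < n)%N)%:R * x p.+1 - \sum_(q < n) ((pend q == p.+1)%N)%:R * x q.
Proof.
rewrite -sum_ord_delta /cartan_act -!sumrB; apply: eq_bigr => q _.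
rewrite [x q * _]mulrC -!mulrBl; congr (_ * _); apply: natr_sub_eq.
by have := c_gt0 (ltn_ord q); rewrite pendE //; lia.
Qed.

Lemma ancestors_gt_coord_eq0 x j q :
  (forall p, (j <= p)%N -> cartan_act x p = 0) ->
  (q < n)%N -> ancestors_gt j q -> x q = 0.
Proof.
move=> vanish; elim/ltn_ind: q => q IH qn anc_q.
have lt_jq : (j < q)%N := anc_q 0%N q erefl.
case: q lt_jq IH qn anc_q => [//|p] lt_jp IH pn anc_p.
have := cartan_act_succ x p; rewrite !vanish ?(ltnW lt_jp) // subrr pn mul1r.
move/eqP; rewrite eq_sym subr_eq0 => /eqP ->; apply: big1 => q _.
have [pend_q | _] := eqP; last by rewrite mul0r.
rewrite IH ?mulr0 // -?pend_q ?ltn_pend //.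
by move=> d z Ez; apply: (anc_p d.+1); rewrite iterS Ez.
Qed.

Local Close Scope ring_scope.

Lemma odd_halfE t : odd t -> t = (t./2).*2.+1.
Proof. by move=> odd_t; rewrite -{1}(odd_double_half t) odd_t. Qed.

Lemma even_halfE t : ~~ odd t -> t = (t./2).*2.
Proof. by move=> even_t; rewrite -{1}(odd_double_half t) (negbTE even_t). Qed.

Section SameSocle.
Variables x' x z : nat.
Hypotheses (Mx' : is_module (itv x' z)) (Mx : is_module (itv x z)) (le_x'x : x' <= x).

Let p' := pdim n c (itv x' z).
Let p := pdim n c (itv x z).

Lemma pdim_itv_le_odd : odd p' -> p <= p'.
Proof.
move=> /odd_halfE Ep'; rewrite leqNgt; apply/negP => lt_p'p.
have [_ V' _ P'] := pdim_itvP Mx' (leq_addl _ _).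
have [_ V N _] := pdim_itvP Mx (leq_addl _ _).
have := N _ lt_p'p; have := V _ (ltnW lt_p'p); move: P'.
rewrite -[pdim_fuel _ _ _]/p' Ep' -doubleS !syz_seq_double !syz_seq_double_succ.
rewrite !iterS is_module_itv.
have := pend_mono (iter_pend_mono p'./2 le_x'x); lia.
Qed.

Lemma pdim_itv_le_even : ~~ odd p -> p' <= p.
Proof.
move=> /even_halfE Ep; rewrite leqNgt; apply/negP => lt_pp'.
have [_ V' N' _] := pdim_itvP Mx' (leq_addl _ _).
have [_ _ _ P] := pdim_itvP Mx (leq_addl _ _).
have := N' _ lt_pp'; have := V' _ (ltnW lt_pp'); move: P.
rewrite -[pdim_fuel _ _ _]/p Ep !syz_seq_double !syz_seq_double_succ.
rewrite is_module_itv.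
have := pend_mono (iter_pend_mono p./2 le_x'x); lia.
Qed.

End SameSocle.

Definition inj_top i := (inj_env c i).1.

Lemma inj_topP i : i < n ->
  [/\ inj_top i <= i, i < pend (inj_top i) &
      forall z, z < inj_top i -> pend z <= i].
Proof.
move=> lt_in; pose P a := i < a + c a.
have hasP : has P (iota 0 i.+1).
  by apply/hasP; exists i; rewrite ?mem_iota /P //; have := c_gt0 lt_in; lia.
have lt_a : inj_top i < i.+1 by move: hasP; rewrite has_find size_iota.
have := nth_find 0 hasP; rewrite nth_iota // => Pa.
split=> [| |z lt_z]; rewrite ?pendE //; try lia.
by have := before_find 0 lt_z; rewrite nth_iota /P ?add0n ?pendE; lia.
Qed.

Lemma simple_mod_itv i : simple_mod i = itv i i.+1.
Proof. by rewrite /itv subSnn. Qed.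

Definition N_top i := if odd (e_simple n c i) then i else inj_top i.

Lemma N_simple_itv i : N_simple n c i = itv (N_top i) i.+1.
Proof. by rewrite /N_simple /N_top simple_mod_itv; case: ifP. Qed.

Lemma inj_env_itv i : inj_env c i = itv (inj_top i) i.+1.
Proof. by []. Qed.

Section Vertex.
Variable i : nat.
Hypothesis lt_in : i < n.

Lemma is_module_simple : is_module (itv i i.+1).
Proof. by rewrite is_module_itv lt_in ltnSn ltn_pend. Qed.

Lemma is_module_inj_env : is_module (itv (inj_top i) i.+1).
Proof.
have [le_ai lt_ia _] := inj_topP lt_in.
by rewrite is_module_itv (leq_ltn_trans le_ai lt_in) ltnS le_ai.
Qed.

Lemma e_simpleE :
  e_simple n c i = minn (pdim n c (itv i i.+1)) (pdim n c (itv (inj_top i) i.+1)).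
Proof. by rewrite /e_simple simple_mod_itv. Qed.

Lemma pdim_N_simple : pdim n c (N_simple n c i) = e_simple n c i.
Proof.
have [le_ai _ _] := inj_topP lt_in.
have le_odd := pdim_itv_le_odd is_module_inj_env is_module_simple le_ai.
have le_even := pdim_itv_le_even is_module_inj_env is_module_simple le_ai.
rewrite /N_simple e_simpleE simple_mod_itv inj_env_itv.
case: (leqP (pdim n c (itv i i.+1)) (pdim n c (itv (inj_top i) i.+1))) => [le_SI | lt_IS].
  by case: ifP => // /negbT /le_even; lia.
by case: ifP => // /le_odd; lia.
Qed.

Lemma is_module_N_top : is_module (itv (N_top i) i.+1).
Proof.
by rewrite /N_top; case: ifP => _; [apply: is_module_simple | apply: is_module_inj_env].
Qed.

Lemma pdim_N_top : pdim n c (itv (N_top i) i.+1) = e_simple n c i.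
Proof. by rewrite -N_simple_itv pdim_N_simple. Qed.

Lemma N_top_le : N_top i <= i.
Proof. by rewrite /N_top; case: ifP => // _; have [] := inj_topP lt_in. Qed.

Lemma hhatE : hhat n c i = syz_seq (N_top i) i.+1 (e_simple n c i).
Proof.
have [E _ _ _] := pdim_itvP is_module_N_top (leq_addl _ _).
by rewrite /hhat N_simple_itv -pdim_N_top /pdim E.
Qed.

Lemma hhat_lt : hhat n c i < n.
Proof.
have [_ V _ _] := pdim_itvP is_module_N_top (leq_addl _ _).
have /V := leqnn (pdim n c (itv (N_top i) i.+1)).
by rewrite is_module_itv pdim_N_top -hhatE => /andP[].
Qed.

Lemma iter_pend_lt_succ :
  iter (e_simple n c i)./2 pend i < iter (e_simple n c i)./2 pend i.+1.
Proof.
have [_ V _ _] := pdim_itvP is_module_simple (leq_addl _ _).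
have : ((e_simple n c i)./2).*2 <= pdim n c (itv i i.+1).
  by have := odd_double_half (e_simple n c i); rewrite e_simpleE; lia.
by move/V; rewrite is_module_itv syz_seq_double syz_seq_double_succ => /and3P[].
Qed.

Lemma ancestors_gt_hhat_odd : odd (e_simple n c i) -> ancestors_gt i (hhat n c i).
Proof.
move=> odd_e; have [_ _ below_a] := inj_topP lt_in.
have [_ V N _] := pdim_itvP is_module_inj_env (leq_addl _ _).
have lt_succ := iter_pend_lt_succ.
have Ee := odd_halfE odd_e; set m := _./2 in Ee lt_succ *.
have lt_mI : m.*2 < pdim n c (itv (inj_top i) i.+1).
  by move: Ee; rewrite e_simpleE; lia.
have := N _ lt_mI; have := V _ (ltnW lt_mI).
rewrite hhatE /N_top odd_e Ee is_module_itv !syz_seq_double_succ syz_seq_double.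
move=> lt_a ne_a.
apply: (ancestors_gt_of below_a (nu := m)) => [d le_dm|].
  exact: leq_ltn_trans (iter_pend_leq _ le_dm) lt_succ.
by rewrite iterS ltn_neqAle ne_a; case/and3P: lt_a.
Qed.

Lemma pend_hhat_even :
  ~~ odd (e_simple n c i) -> pend (hhat n c i) = iter (e_simple n c i)./2 pend i.+1.
Proof.
move=> even_e; have [_ _ _ P] := pdim_itvP is_module_inj_env (leq_addl _ _).
have := pdim_N_top; rewrite /N_top (negbTE even_e) => pdim_I.
have Ee := even_halfE even_e; set m := _./2 in Ee *.
move: P; rewrite -[pdim_fuel _ _ _]/(pdim n c _) pdim_I Ee.
rewrite syz_seq_double_succ syz_seq_double => ->.
by rewrite hhatE /N_top (negbTE even_e) Ee syz_seq_double.
Qed.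

Lemma ancestors_gt_hhat_even q : ~~ odd (e_simple n c i) ->
  q < hhat n c i -> pend q = pend (hhat n c i) -> ancestors_gt i q.
Proof.
move=> even_e lt_qk; rewrite pend_hhat_even //; have lt_succ := iter_pend_lt_succ.
have [_ lt_ia below_a] := inj_topP lt_in.
move: lt_qk lt_succ; rewrite hhatE /N_top (negbTE even_e).
rewrite (even_halfE even_e) doubleK syz_seq_double.
case: (_./2) => [|m] lt_qk lt_succ Eq.
  by have := below_a _ lt_qk; move: Eq; rewrite /=; lia.
apply: (ancestors_gt_of below_a (nu := m)) => // d le_dm.
rewrite ltnNge; apply/negP => /pend_mono le_qd.
by have := iter_pend_leq i (le_dm : d.+1 <= m.+1); rewrite /= in lt_succ Eq *; lia.
Qed.

Lemma coord_hhat_eq0 (x : nat -> rat) :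
  (forall p, i <= p -> cartan_act x p = 0%R) ->
  (forall q, hhat n c i < q -> x q = 0%R) -> x (hhat n c i) = 0%R.
Proof.
move=> vanish above; have lt_kn := hhat_lt.
case: (boolP (odd (e_simple n c i))) => [odd_e | even_e].
  exact: ancestors_gt_coord_eq0 vanish lt_kn (ancestors_gt_hhat_odd odd_e).
have : i < pend (hhat n c i) by rewrite pend_hhat_even // leq_iter_pend.
case Ep: (pend _) => [//|p] lt_ip.
have := cartan_act_succ x p.
rewrite !vanish ?(ltnW lt_ip) // subrr -Ep above ?ltn_pend //.
rewrite mulr0 sub0r => /esym/eqP; rewrite oppr_eq0 (bigD1 (Ordinal lt_kn)) //=.
rewrite Ep eqxx mul1r big1 ?addr0 => [/eqP // | q ne_qk].
have [pend_q | _] := eqP; last by rewrite mul0r.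
have {ne_qk} : q != hhat n c i :> nat.
  by apply: contraNneq ne_qk => Eqk; apply/eqP/val_inj.
rewrite mul1r; case: ltngtP => // [lt_qk | lt_kq] _; last exact: above.
apply: ancestors_gt_coord_eq0 vanish (ltn_ord q) (ancestors_gt_hhat_even _ _ _) => //.
by rewrite Ep.
Qed.

Lemma res_vec_N_simple :
  let x := res_vec n (N_simple n c i) in
  [/\ forall p, cartan_act x p = ((N_top i <= p < i.+1)%N)%:R%R,
      forall q, hhat n c i < q -> x q = 0%R & x (hhat n c i) != 0%R].
Proof.
have [above pivot] := res_vec_pivot is_module_N_top (leq_addl _ _).
rewrite -[pdim_fuel _ _ _]/(pdim n c _) pdim_N_top -hhatE in above pivot.
rewrite N_simple_itv; split=> //.
exact: cartan_act_res_vec is_module_N_top (leq_addl _ _).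
Qed.

End Vertex.

Lemma hhat_inj j j' : j < n -> j' < n -> hhat n c j = hhat n c j' -> j = j'.
Proof.
suff no_collision k k' : k < n -> k' < k -> hhat n c k' = hhat n c k -> False.
  move=> jn j'n Ehh; case: (ltngtP j j') => // lt; first by case: (no_collision j' j).
  by case: (no_collision j j' jn lt (esym Ehh)).
move=> kn lt_k'k Ehh; have [dim above pivot] := res_vec_N_simple (ltn_trans lt_k'k kn).
rewrite Ehh in above pivot; move/eqP: pivot; apply; apply: coord_hhat_eq0 => // p le_kp.
by rewrite dim ltnNge (leq_trans lt_k'k le_kp) andbF.
Qed.

End Kupisch.

Section Coxeter.
Variables (n : nat) (c : nat -> nat).
Hypothesis Hc : kupisch n c.
Local Open Scope ring_scope.

Definition hhat_ord (i : 'I_n) : 'I_n := Ordinal (hhat_lt Hc (ltn_ord i)).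

Lemma hhat_ord_inj : injective hhat_ord.
Proof. by move=> i j /(congr1 val) /(hhat_inj Hc (ltn_ord i) (ltn_ord j)) /val_inj. Qed.

Definition hhat_perm : 'S_n := perm hhat_ord_inj.

Lemma hhat_permE i : hhat_perm i = hhat n c i :> nat.
Proof. by rewrite permE. Qed.

Definition res_mx : 'M[rat]_n := \matrix_(r, i) res_vec c n (N_simple n c i) r.

Definition dim_mx : 'M[rat]_n :=
  \matrix_(r, i) ((N_top n c i <= r < i.+1)%N)%:R.

Lemma cartan_mx_res_mx : cartan n c *m res_mx = dim_mx.
Proof.
apply/matrixP => r i; have [dim _ _] := res_vec_N_simple Hc (ltn_ord i).
by rewrite !mxE -dim; apply: eq_bigr => q _; rewrite !mxE; case: ifP.
Qed.

Lemma dim_mx_upper : upper_triangular dim_mx.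
Proof. by move=> i j lt_ji; rewrite mxE ltnNge lt_ji andbF. Qed.

Lemma dim_mx_unit : dim_mx \in unitmx.
Proof.
rewrite unitmxE (det_upper_triangular dim_mx_upper) big1 ?unitr1 // => i _.
by rewrite mxE N_top_le ?ltnSn.
Qed.

Lemma cartan_trig : is_trig_mx (cartan n c).
Proof. by apply/is_trig_mxP => i j lt_ij; rewrite mxE leqNgt lt_ij. Qed.

Lemma cartan_unit : cartan n c \in unitmx.
Proof.
rewrite unitmxE det_trig ?cartan_trig // big1 ?unitr1 // => i _.
by rewrite mxE leqnn -{1}[i : nat]addn0 ltn_add2l (c_gt0 Hc (ltn_ord i)).
Qed.

Lemma res_mx_col_perm_upper : upper_triangular (col_perm hhat_perm^-1 res_mx).
Proof.
move=> r k lt_kr; have [_ above _] := res_vec_N_simple Hc (ltn_ord (hhat_perm^-1 k)%g).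
by rewrite !mxE above // -hhat_permE permKV.
Qed.

Lemma res_mx_col_permE : res_mx = col_perm hhat_perm^-1 res_mx *m perm_mx hhat_perm^-1.
Proof. by rewrite col_permE invgK -mulmxA -perm_mxM mulgV perm_mx1 mulmx1. Qed.

Lemma invmx_cartan : invmx (cartan n c) = res_mx *m invmx dim_mx.
Proof.
apply: (canRL (mulmxK dim_mx_unit)).
by rewrite -cartan_mx_res_mx mulKmx ?cartan_unit.
Qed.

Lemma coxeter_bruhat :
  bruhat_decomp (coxeter n c) hhat_perm^-1
    (- ((cartan n c)^T *m col_perm hhat_perm^-1 res_mx)) (invmx dim_mx).
Proof.
split.
- apply/upper_triangular_opp/upper_triangular_mul; last exact: res_mx_col_perm_upper.
  exact: upper_triangular_trmx cartan_trig.
- exact: upper_triangular_invmx dim_mx_upper dim_mx_unit.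
- by rewrite /coxeter invmx_cartan {1}res_mx_col_permE !mulNmx !mulmxA.
Qed.

Lemma coxeter_unit : coxeter n c \in unitmx.
Proof.
rewrite /coxeter -scaleN1r unitmxZ ?unitrN1 // unitmx_mul unitmx_tr unitmx_inv.
by rewrite cartan_unit.
Qed.

End Coxeter.

Local Open Scope ring_scope.

Theorem theorem3p1 (n : nat) (c : nat -> nat) (Hc : kupisch n c) :
  (exists (s : 'S_n) (U1 U2 : 'M[rat]_n), bruhat_decomp (coxeter n c) s U1 U2) /\
  (forall (s : 'S_n) (U1 U2 : 'M[rat]_n),
     bruhat_decomp (coxeter n c) s U1 U2 ->
     forall i j : 'I_n,
       ((perm_mx s : 'M[rat]_n) j i != 0) = (nat_of_ord j == hhat n c i)%N).
Proof.
split; first by exists (hhat_perm Hc)^-1%g; do 2!eexists; apply: coxeter_bruhat.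
move=> s U1 U2 dec i j.
have <- := bruhat_perm_unique (coxeter_unit Hc) (coxeter_bruhat Hc) dec.
rewrite !mxE pnatr_eq0 eqb0 negbK -hhat_permE.
by rewrite -(inj_eq (@perm_inj _ (hhat_perm Hc))) permKV (inj_eq val_inj).
Qed.
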